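(* A semigroup $S$ is a T2R semigroup if and only if it satisfies all of the following conditions. (1) $S$ is a semilattice of a non-trivial nil semigroup $S_0$ and a two-element right zero semigroup $S_1$ such that $S_0S_1\subseteq S_0$. (2) The ideals of $S$ form a chain with respect to inclusion. (3) For each $b\in S_0$, either $b\in bS_1$ or $bS_1\subseteq S^1bS_0$. (4) For each $b\in S_0$, either $\{b\}=S_1b$ or $S_1b\cap (S_0bS^1\cup S^1bS_0)\neq\emptyset$. (5) For each $b\in S$, if $|J_b|=2$, $I(b)\neq\{0\}$ and $a\in I(b)$, then there are elements $x,y\in S^1$ such that $xJ_by\cap J_a\neq\emptyset$ and $xJ_by\not\subseteq J_a$.
   Context: A semigroup $S$ is a $\Delta$-semigroup if the lattice of all congruences of $S$ is a chain with respect to inclusion. A semigroup $N$ with zero $0$ is nil if every element has some power equal to $0$; it is non-trivial if it has more than one element. A semigroup $S$ is a semilattice of a subsemigroup $S_0$ (which is an ideal) and a subsemigroup $S_1$ if $S$ is the disjoint union $S_0\cup S_1$, $S_0$ is an ideal of $S$ and $S_1$ is a subsemigroup (so $S/S_0$ is the two-element semilattice). A right zero semigroup satisfies $xy=y$ for all $x,y$. A T2R semigroup is a $\Delta$-semigroup $S$ which is a semilattice of a non-trivial nil ideal $S_0$ and a subsemigroup $S_1$ which is a two-element right zero semigroup. $S^1$ denotes $S$ with an identity element $1$ adjoined. For $a\in S$: $J(a)=S^1aS^1$, $J_a=\{s\in S: J(s)=J(a)\}$, and $I(a)=J(a)\setminus J_a$. For $x,y\in S^1$ and $A\subseteq S$,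 $xAy=\{xay: a\in A\}$. $0$ denotes the zero of $S_0$ (which is the zero of $S$). *)

Set Implicit Arguments.

Section Semigroups.
Variable (T : Type) (op : T -> T -> T).
Local Infix "*" := op.

Definition associative : Prop := forall x y z, x * (y * z) = (x * y) * z.

Definition congruence (r : T -> T -> Prop) : Prop :=
  (forall x, r x x) /\ (forall x y, r x y -> r y x) /\
  (forall x y z, r x y -> r y z -> r x z) /\
  (forall x y c, r x y -> r (c * x) (c * y) /\ r (x * c) (y * c)).

Definition Delta_semigroup : Prop :=
  forall r s, congruence r -> congruence s ->
    (forall x y, r x y -> s x y) \/ (forall x y, s x y -> r x y).

(* positive powers: pw x n = x^(n+1) *)
Fixpoint pw (x : T) (n : nat) : T :=
  match n with O => x | Datatypes.S m => x * pw x m end.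

(* T^1 : None plays the role of the adjoined identity 1 *)
Definition lmul (x : option T) (a : T) : T :=
  match x with None => a | Some x' => x' * a end.
Definition rmul (a : T) (y : option T) : T :=
  match y with None => a | Some y' => a * y' end.

Definition ideal (I : T -> Prop) : Prop :=
  (exists a, I a) /\ (forall a s, I a -> I (s * a) /\ I (a * s)).

(* T is a semilattice of the ideal S0 and the subsemigroup S1 = T \ S0 *)
Definition semilattice_decomp (S0 : T -> Prop) : Prop :=
  ideal S0 /\ (forall x y, ~ S0 x -> ~ S0 y -> ~ S0 (x * y)).

Definition nil_with_zero (S0 : T -> Prop) (z : T) : Prop :=
  S0 z /\ (forall x, S0 x -> z * x = z /\ x * z = z) /\
  (forall x, S0 x -> exists n, pw x n = z).

Definition nontrivial (S0 : T -> Prop) : Prop :=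
  exists x y, S0 x /\ S0 y /\ x <> y.

Definition two_elt_right_zero_compl (S0 : T -> Prop) : Prop :=
  (exists e f, e <> f /\ forall x, ~ S0 x <-> (x = e \/ x = f)) /\
  (forall x y, ~ S0 x -> ~ S0 y -> x * y = y).

Definition T2R_decomp (S0 : T -> Prop) (z : T) : Prop :=
  semilattice_decomp S0 /\ nil_with_zero S0 z /\ nontrivial S0 /\
  two_elt_right_zero_compl S0.

Definition T2R : Prop :=
  Delta_semigroup /\ exists S0 z, T2R_decomp S0 z.

Definition Jp (a : T) : T -> Prop :=
  fun s => exists x y : option T, s = rmul (lmul x a) y.
Definition Jcl (a : T) : T -> Prop :=
  fun s => forall t, Jp s t <-> Jp a t.
Definition Icl (a : T) : T -> Prop :=
  fun s => Jp a s /\ ~ Jcl a s.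

End Semigroups.

From Stdlib Require Import Classical.

(* The basic tool is nil absorption: if y is congruent to s y t where s or t
   lies in S0, then iterating gives y congruent to s^n y t' = 0.  From it we
   read off the J-classes of S: a class J_p with p in S0 \ {0} lies in p S1^1,
   so every J-class has at most two elements.

   Forward direction (Delta => (2)-(5)): in a Delta-semigroup the principal
   congruence of a pair (u,v) not identified by the Rees congruence of an
   ideal I contains I x I.  Each of (2)-(5) follows by choosing I and a
   property that is invariant along the elementary steps of the principal
   congruence and holds at 0.

   Backward direction ((2)-(5) => Delta): conditions (3)-(5) show that a
   congruence identifying an element with one strictly below it in the
   J-order collapses that element's principal ideal to 0.  Hence every pair
   p <> q generates, inside any congruence containing it, a "glue" relation
   of one of two shapes: J(m) collapsed, or I(p) collapsed together with the
   class J_p identified.  Using (2), any two such relations are comparable,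
   which forces any two congruences to be comparable. *)

Section Semigroup.
Variable S : Type.
Variable op : S -> S -> S.
Hypothesis Hassoc : associative op.
Local Notation "x ** y" := (op x y) (at level 40, left associativity).

Definition omul (x y : option S) : option S :=
  match x, y with
  | None, _ => y
  | _, None => x
  | Some a, Some b => Some (a ** b)
  end.

Definition ctx (x : option S) (a : S) (y : option S) : S := rmul op (lmul op x a) y.

Lemma lmul_mul x a c : lmul op x (a ** c) = lmul op x a ** c.
Proof. destruct x; simpl; rewrite ?Hassoc; reflexivity. Qed.

Lemma rmul_mul a c y : rmul op (a ** c) y = a ** rmul op c y.
Proof. destruct y; simpl; rewrite ?Hassoc; reflexivity. Qed.

Lemma ctx_ctx x a y x' y' : ctx x' (ctx x a y) y' = ctx (omul x' x) a (omul y y').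
Proof. unfold ctx. destruct x, y, x', y'; simpl; rewrite ?Hassoc; reflexivity. Qed.

Lemma ctx_mull c x a y : c ** ctx x a y = ctx (omul (Some c) x) a y.
Proof. unfold ctx. destruct x, y; simpl; rewrite ?Hassoc; reflexivity. Qed.

Lemma ctx_mulr c x a y : ctx x a y ** c = ctx x a (omul y (Some c)).
Proof. unfold ctx. destruct x, y; simpl; rewrite ?Hassoc; reflexivity. Qed.

Lemma ctx_inner_l x c a y : ctx x (c ** a) y = ctx (omul x (Some c)) a y.
Proof. unfold ctx. destruct x, y; simpl; rewrite ?Hassoc; reflexivity. Qed.

Lemma cong_refl r x : congruence op r -> r x x.
Proof. intros [H _]; auto. Qed.

Lemma cong_sym r x y : congruence op r -> r x y -> r y x.
Proof. intros [_ [H _]]; auto. Qed.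

Lemma cong_trans r x y w : congruence op r -> r x y -> r y w -> r x w.
Proof. intros [_ [_ [H _]]]; eauto. Qed.

Lemma cong_mull r c x y : congruence op r -> r x y -> r (c ** x) (c ** y).
Proof. intros [_ [_ [_ H]]] h; apply H; auto. Qed.

Lemma cong_mulr r c x y : congruence op r -> r x y -> r (x ** c) (y ** c).
Proof. intros [_ [_ [_ H]]] h; apply H; auto. Qed.

Lemma cong_ctx r x a b y : congruence op r -> r a b -> r (ctx x a y) (ctx x b y).
Proof.
  intros Hr h. unfold ctx. destruct x, y; simpl;
    repeat first [assumption | apply (cong_mulr r); [assumption|]
                 | apply (cong_mull r); [assumption|]].
Qed.

Lemma cong_pw r x y n : congruence op r -> r x y -> r (pw op x n) (pw op y n).
Proof.
  intros Hr h. induction n as [|n IH]; simpl; auto.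
  apply (cong_trans r _ (y ** pw op x n));
    [exact Hr | apply (cong_mulr r) | apply (cong_mull r)]; auto.
Qed.

Lemma cong_pair r p q u v : congruence op r -> r p q ->
  (u = p \/ u = q) -> (v = p \/ v = q) -> r u v.
Proof.
  intros Hr H [-> | ->] [-> | ->];
    first [exact (cong_refl r _ Hr) | exact H | exact (cong_sym r _ _ Hr H)].
Qed.

Lemma eq_cong : congruence op (@eq S).
Proof. repeat split; intros; subst; auto. Qed.

Definition subrel (R R' : S -> S -> Prop) : Prop := forall x y, R x y -> R' x y.

Definition rees (I : S -> Prop) : S -> S -> Prop := fun x y => x = y \/ (I x /\ I y).

Lemma rees_cong I : (forall a s, I a -> I (s ** a) /\ I (a ** s)) -> congruence op (rees I).
Proof.
  intros HI. unfold rees, congruence. split; [|split; [|split]].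
  - intros; left; auto.
  - intros x y [h|[h1 h2]]; [left; auto | right; auto].
  - intros x y w [h|h] [h'|h']; subst; [left; reflexivity|right; tauto..].
  - intros x y c [h|[h1 h2]].
    + subst; split; left; reflexivity.
    + split; right; split; first [apply (HI x c) | apply (HI y c)]; auto.
Qed.

Inductive chain (R : S -> S -> Prop) : S -> S -> Prop :=
| ch_refl : forall x, chain R x x
| ch_step : forall x y w, (R x y \/ R y x) -> chain R y w -> chain R x w.

Lemma chain_trans R x y w : chain R x y -> chain R y w -> chain R x w.
Proof. induction 1; intros; auto. eapply ch_step; eauto. Qed.

Lemma chain_sym R x y : chain R x y -> chain R y x.
Proof.
  induction 1 as [|x y w Hxy _ IH]; [constructor|].
  apply chain_trans with y; auto.
  eapply ch_step; [destruct Hxy; [right|left]; eauto | constructor].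
Qed.

Lemma chain_cong R :
  (forall p q c, R p q -> R (c ** p) (c ** q) /\ R (p ** c) (q ** c)) ->
  congruence op (chain R).
Proof.
  intros HR. split; [|split; [|split]].
  - intros; constructor.
  - apply chain_sym.
  - apply chain_trans.
  - intros x y c H. split; induction H; try constructor;
      (eapply ch_step; [|eauto]); destruct H; [left|right| left|right]; apply HR; auto.
Qed.

Lemma chain_inv R (P : S -> Prop) : (forall p q, R p q -> (P p <-> P q)) ->
  forall x y, chain R x y -> (P x <-> P y).
Proof.
  intros HP. induction 1 as [|x y w [H|H] _ IH]; [tauto| |]; apply HP in H; tauto.
Qed.

Lemma chain_cross R (P : S -> Prop) x y : chain R x y -> P x -> ~ P y ->
  exists p q, (R p q \/ R q p) /\ P p /\ ~ P q.
Proof.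
  induction 1 as [|x y w Hxy _ IH]; intros Hx Hw; [contradiction|].
  destruct (classic (P y)); [apply IH; auto | exists x, y; auto].
Qed.

Definition Rp (u v : S) : S -> S -> Prop :=
  fun p q => exists x y, p = ctx x u y /\ q = ctx x v y.
Definition pcong (u v : S) : S -> S -> Prop := chain (Rp u v).

Lemma pcong_cong u v : congruence op (pcong u v).
Proof.
  apply chain_cong. intros p q c [x [y [-> ->]]]. split.
  - exists (omul (Some c) x), y. rewrite !ctx_mull; auto.
  - exists x, (omul y (Some c)). rewrite !ctx_mulr; auto.
Qed.

Lemma pcong_uv u v : pcong u v u v.
Proof. eapply ch_step; [left; exists None, None; split; reflexivity | constructor]. Qed.

Lemma delta_rees_collapse (HDelta : Delta_semigroup op) I u v :
  (forall a s, I a -> I (s ** a) /\ I (a ** s)) -> ~ rees I u v ->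
  forall w w', I w -> I w' -> pcong u v w w'.
Proof.
  intros HI Huv w w' Hw Hw'.
  destruct (HDelta _ _ (pcong_cong u v) (rees_cong I HI)) as [A|A].
  - exfalso. apply Huv, A, pcong_uv.
  - apply A. right; auto.
Qed.

(* In a Delta-semigroup the ideals form a chain: compare Rees congruences. *)
Lemma delta_ideals_chain (HDelta : Delta_semigroup op) I J :
  ideal op I -> ideal op J -> (forall s, I s -> J s) \/ (forall s, J s -> I s).
Proof.
  intros [[i Hi] HI] [[j Hj] HJ].
  destruct (HDelta _ _ (rees_cong I HI) (rees_cong J HJ)) as [A|A]; [left|right];
    intros s Hs.
  - assert (Hr : rees J s (j ** s)) by (apply A; right; split; [|apply (HI s j Hs)]; auto).
    destruct Hr as [E|[B _]]; [rewrite E; apply (HJ j s Hj) | exact B].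
  - assert (Hr : rees I s (i ** s)) by (apply A; right; split; [|apply (HJ s i Hs)]; auto).
    destruct Hr as [E|[B _]]; [rewrite E; apply (HI i s Hi) | exact B].
Qed.

Lemma Jp_refl a : Jp op a a.
Proof. exists None, None; reflexivity. Qed.

Lemma Jp_trans a b c : Jp op a b -> Jp op b c -> Jp op a c.
Proof.
  intros [x [y ->]] [x' [y' ->]]. exists (omul x' x), (omul y y').
  exact (ctx_ctx x a y x' y').
Qed.

Lemma Jp_mull a b c : Jp op a b -> Jp op a (c ** b).
Proof. intros H. eapply Jp_trans; [exact H | exists (Some c), None; reflexivity]. Qed.

Lemma Jp_mulr a b c : Jp op a b -> Jp op a (b ** c).
Proof. intros H. eapply Jp_trans; [exact H | exists None, (Some c); reflexivity]. Qed.

Lemma Jp_clos a : forall b s, Jp op a b -> Jp op a (s ** b) /\ Jp op a (b ** s).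
Proof. intros; split; [apply Jp_mull|apply Jp_mulr]; auto. Qed.

Lemma Jp_ideal a : ideal op (Jp op a).
Proof. split; [exists a; apply Jp_refl | apply Jp_clos]. Qed.

Lemma Jcl_refl a : Jcl op a a.
Proof. intro; tauto. Qed.

Lemma Jcl_sym a b : Jcl op a b -> Jcl op b a.
Proof. intros H t; specialize (H t); tauto. Qed.

Lemma Jcl_trans a b c : Jcl op a b -> Jcl op b c -> Jcl op a c.
Proof. intros H H' t; specialize (H t); specialize (H' t); tauto. Qed.

Lemma Jcl_Jp a b : Jcl op a b -> Jp op a b.
Proof. intros H. apply H, Jp_refl. Qed.

Lemma Jcl_Jp' a b : Jcl op a b -> Jp op b a.
Proof. intros H. apply H, Jp_refl. Qed.

Lemma Jcl_of a b : Jp op a b -> Jp op b a -> Jcl op a b.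
Proof. intros H1 H2 t; split; intro; eapply Jp_trans; eauto. Qed.

Lemma Icl_Jp p x : Icl op p x -> Jp op p x.
Proof. intros [H _]; auto. Qed.

Lemma Icl_below p m x : Icl op p m -> Jp op m x -> Icl op p x.
Proof.
  intros [Hpm Hn] Hmx. split; [eapply Jp_trans; eauto|].
  intro Hc. apply Hn, Jcl_of; auto. eapply Jp_trans; [exact Hmx | apply (Jcl_Jp' _ _ Hc)].
Qed.

Lemma Icl_clos p : forall w s, Icl op p w -> Icl op p (s ** w) /\ Icl op p (w ** s).
Proof.
  intros w s H. split; apply (Icl_below p w); auto;
    [apply Jp_mull | apply Jp_mulr]; apply Jp_refl.
Qed.

Section IdealChain.
Hypothesis Hchain : forall I J, ideal op I -> ideal op J ->
  (forall s, I s -> J s) \/ (forall s, J s -> I s).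

Lemma Jp_chain a b : (forall s, Jp op a s -> Jp op b s) \/ (forall s, Jp op b s -> Jp op a s).
Proof. apply Hchain; apply Jp_ideal. Qed.

Definition glue (K T : S -> Prop) : S -> S -> Prop :=
  fun x y => x = y \/ (K x /\ K y) \/ (T x /\ T y).

Lemma glue_into K T K' T' : (forall x, K x \/ T x -> K' x) -> subrel (glue K T) (glue K' T').
Proof.
  intros H x y [E|[[A B]|[A B]]]; unfold glue; [left; exact E | right; left; split..];
    apply H; auto.
Qed.

Lemma glue_mono K T K' T' : (forall x, K x -> K' x) -> (forall x, T x -> T' x) ->
  subrel (glue K T) (glue K' T').
Proof.
  intros HK HT x y [E|[[A B]|[A B]]]; unfold glue;
    [left; exact E | right; left; split | right; right; split]; auto.
Qed.

Inductive shape : (S -> Prop) -> (S -> Prop) -> Prop :=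
| shape_ideal m : shape (Jp op m) (fun _ => False)
| shape_class p : shape (Icl op p) (Jcl op p).

Lemma class_in_ideal p x : Icl op p x \/ Jcl op p x -> Jp op p x.
Proof. intros [[H _]|H]; [exact H | apply Jcl_Jp; exact H]. Qed.

Lemma shape_ideal_class m p :
  subrel (glue (Jp op m) (fun _ => False)) (glue (Icl op p) (Jcl op p)) \/
  subrel (glue (Icl op p) (Jcl op p)) (glue (Jp op m) (fun _ => False)).
Proof.
  destruct (Jp_chain m p) as [Hmp|Hpm].
  - destruct (classic (Jcl op p m)) as [Hc|Hc].
    + right. apply glue_into. intros x Hx.
      apply (Jp_trans m p x); [apply Jcl_Jp'; exact Hc | apply class_in_ideal; exact Hx].
    + left. apply glue_into. intros x [Hx|[]].
      apply (Icl_below p m x); [split; [apply Hmp, Jp_refl | exact Hc] | exact Hx].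
  - right. apply glue_into. intros x Hx. apply Hpm, class_in_ideal; exact Hx.
Qed.

(* Two class shapes coincide when p, p' are J-equivalent, else one lies in
   the lower part I of the other. *)
Lemma shape_class_class p p' :
  subrel (glue (Icl op p) (Jcl op p)) (glue (Icl op p') (Jcl op p')) \/
  subrel (glue (Icl op p') (Jcl op p')) (glue (Icl op p) (Jcl op p)).
Proof.
  destruct (classic (Jcl op p p')) as [Hc|Hc].
  - left. apply glue_mono; intros x Hx.
    + split; [eapply Jp_trans; [apply Jcl_Jp'; exact Hc | apply Icl_Jp; exact Hx] |].
      intro Hx'. apply (proj2 Hx). eapply Jcl_trans; eauto.
    + eapply Jcl_trans; [apply Jcl_sym; exact Hc | exact Hx].
  - destruct (Jp_chain p p') as [H|H]; [left|right]; apply glue_into; intros x Hx.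
    + apply (Icl_below p' p x); [|apply class_in_ideal; exact Hx].
      split; [apply H, Jp_refl | intro; apply Hc, Jcl_sym; auto].
    + apply (Icl_below p p' x); [|apply class_in_ideal; exact Hx].
      split; [apply H, Jp_refl | exact Hc].
Qed.

Lemma shape_chain K T K' T' : shape K T -> shape K' T' ->
  subrel (glue K T) (glue K' T') \/ subrel (glue K' T') (glue K T).
Proof.
  intros [m|p] [m'|p'].
  - destruct (Jp_chain m m') as [H|H]; [left|right]; apply glue_into; intros x [Hx|[]]; auto.
  - apply shape_ideal_class.
  - destruct (shape_ideal_class m' p); auto.
  - apply shape_class_class.
Qed.
End IdealChain.

Section Decomposition.
Variable S0 : S -> Prop.
Variable z : S.
Hypothesis HD : T2R_decomp op S0 z.

Lemma S0_l a s : S0 a -> S0 (s ** a).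
Proof. destruct HD as [[[_ H] _] _]. intros Ha; apply (H a s Ha). Qed.

Lemma S0_r a s : S0 a -> S0 (a ** s).
Proof. destruct HD as [[[_ H] _] _]. intros Ha; apply (H a s Ha). Qed.

Lemma S0_z : S0 z.
Proof. destruct HD as [_ [[H _] _]]. exact H. Qed.

Lemma nil_S0 x : S0 x -> exists n, pw op x n = z.
Proof. destruct HD as [_ [[_ [_ H]] _]]. auto. Qed.

Lemma rz x y : ~ S0 x -> ~ S0 y -> x ** y = y.
Proof. destruct HD as [_ [_ [_ [_ H]]]]. auto. Qed.

Lemma S1_elem : exists e, ~ S0 e.
Proof. destruct HD as [_ [_ [_ [[e [f [_ H]]] _]]]]. exists e. apply H; auto. Qed.

Lemma S1_two p q x : ~ S0 p -> ~ S0 q -> p <> q -> ~ S0 x -> x = p \/ x = q.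
Proof.
  destruct HD as [_ [_ [_ [[e [f [Hef H]]] _]]]]. intros Hp Hq Hpq Hx.
  destruct (proj1 (H p) Hp), (proj1 (H q) Hq), (proj1 (H x) Hx); subst; auto; congruence.
Qed.

Lemma zl x : z ** x = z.
Proof.
  destruct HD as [_ [[Hz [H _]] _]].
  destruct (classic (S0 x)) as [Hx|Hx]; [apply H; auto|].
  rewrite <- (proj1 (H z Hz)) at 1. rewrite <- Hassoc. apply H, S0_r, Hz.
Qed.

Lemma zr x : x ** z = z.
Proof.
  destruct HD as [_ [[Hz [H _]] _]].
  destruct (classic (S0 x)) as [Hx|Hx]; [apply H; auto|].
  rewrite <- (proj1 (H z Hz)) at 1. rewrite Hassoc. apply H, S0_l, Hz.
Qed.

Lemma ctx_z x y : ctx x z y = z.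
Proof. unfold ctx; destruct x, y; simpl; repeat (rewrite zl || rewrite zr); reflexivity. Qed.

Lemma ctx_zl a y : ctx (Some z) a y = z.
Proof. unfold ctx; destruct y; simpl; rewrite ?zl; reflexivity. Qed.

Lemma ctx_zr x a : ctx x a (Some z) = z.
Proof. unfold ctx; simpl. apply zr. Qed.

Lemma pw_idem x n : ~ S0 x -> pw op x n = x.
Proof. intros H; induction n; simpl; auto. rewrite IHn; apply rz; auto. Qed.

Definition outS0 (o : option S) : Prop := match o with None => True | Some a => ~ S0 a end.
Definition inS0 (o : option S) : Prop := match o with None => False | Some a => S0 a end.

Lemma outS0_dec o : outS0 o \/ inS0 o.
Proof. destruct o as [a|]; simpl; auto. destruct (classic (S0 a)); auto. Qed.

Lemma outS0_inS0 o : outS0 o -> inS0 o -> False.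
Proof. destruct o; simpl; tauto. Qed.

Lemma inS0_omul_l x x' : inS0 x -> inS0 (omul x' x).
Proof. destruct x as [a|]; simpl; [|tauto]. destruct x'; simpl; auto using S0_l. Qed.

Lemma inS0_omul_r y y' : inS0 y -> inS0 (omul y y').
Proof. destruct y as [a|]; simpl; [|tauto]. destruct y'; simpl; auto using S0_r. Qed.

Lemma outS0_omul x y : outS0 x -> outS0 y -> outS0 (omul x y).
Proof.
  destruct x, y; simpl; auto. intros. rewrite rz; auto.
Qed.

(* Nil absorption: if r y (s y t) with s in S0 (resp. t in S0) then r y z,
   since iterating yields r y (s^n y t') (resp. r y (s' y t^n)). *)
Lemma absorb_left r y s t : congruence op r -> S0 s -> r y (ctx (Some s) y t) -> r y z.
Proof.
  intros Hr Hs H.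
  assert (Hpow : forall n, exists t', r y (ctx (Some (pw op s n)) y t')).
  { induction n as [|n [t' IH]]; [exists t; exact H|].
    exists (omul t' t). apply cong_trans with (ctx (Some s) y t); auto.
    replace (ctx (Some (pw op s (Datatypes.S n))) y (omul t' t))
      with (ctx (Some s) (ctx (Some (pw op s n)) y t') t) by exact (ctx_ctx _ _ _ _ _).
    apply cong_ctx; auto. }
  destruct (nil_S0 s Hs) as [n Hn]. destruct (Hpow n) as [t' Ht'].
  rewrite Hn, ctx_zl in Ht'. exact Ht'.
Qed.

Lemma absorb_right r y s t : congruence op r -> S0 t -> r y (ctx s y (Some t)) -> r y z.
Proof.
  intros Hr Ht H.
  assert (Hpow : forall n, exists s', r y (ctx s' y (Some (pw op t n)))).
  { induction n as [|n [s' IH]]; [exists s; exact H|].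
    exists (omul s' s). apply cong_trans with (ctx s' y (Some (pw op t n))); auto.
    replace (ctx (omul s' s) y (Some (pw op t (Datatypes.S n))))
      with (ctx s' (ctx s y (Some t)) (Some (pw op t n))) by exact (ctx_ctx _ _ _ _ _).
    apply cong_ctx; auto. }
  destruct (nil_S0 t Ht) as [n Hn]. destruct (Hpow n) as [s' Hs'].
  rewrite Hn, ctx_zr in Hs'. exact Hs'.
Qed.

Lemma absorb r y s t : congruence op r -> r y (ctx s y t) -> inS0 s \/ inS0 t -> r y z.
Proof.
  intros Hr H [Hs|Ht].
  - destruct s as [s|]; [|contradiction]. eapply absorb_left; eauto.
  - destruct t as [t|]; [|contradiction]. eapply absorb_right; eauto.
Qed.

Lemma absorb_eq y s t : y = ctx s y t -> inS0 s \/ inS0 t -> y = z.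
Proof. apply (absorb eq y s t eq_cong). Qed.

Lemma Jp_S0 m x : S0 m -> Jp op m x -> S0 x.
Proof. intros H [a [b ->]]. unfold rmul, lmul; destruct a, b; auto using S0_l, S0_r. Qed.

Lemma Jp_z x : Jp op z x -> x = z.
Proof. intros [a [b ->]]. apply (ctx_z a b). Qed.

Lemma Jp_to_z a : Jp op a z.
Proof. exists None, (Some z). simpl. symmetry; apply zr. Qed.

Lemma Jcl_z s : Jcl op z s -> s = z.
Proof. intros H. apply Jp_z, Jcl_Jp; auto. Qed.

Lemma Jcl_S1 u v : ~ S0 u -> ~ S0 v -> Jcl op u v.
Proof.
  intros Hu Hv. apply Jcl_of.
  - exists None, (Some v). simpl. symmetry; apply rz; auto.
  - exists None, (Some u). simpl. symmetry; apply rz; auto.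
Qed.

Lemma Jcl_S0_S1 u s : ~ S0 u -> S0 s -> ~ Jcl op u s.
Proof. intros Hu Hs H. apply Hu, (Jp_S0 s u Hs), Jcl_Jp'; auto. Qed.

(* An element J-equivalent to a non-zero p in S0 is p c with c in S1^1:
   from p = (x' x) p (y y') nil absorption forces x' x, y y' outside S0,
   and then x p = p. *)
Lemma Jclass_form p s : S0 p -> p <> z -> Jcl op p s ->
  exists c, outS0 c /\ s = rmul op p c.
Proof.
  intros Hp Hpz H.
  destruct (Jcl_Jp _ _ H) as [x [y Hs]]. destruct (Jcl_Jp' _ _ H) as [x' [y' Hp']].
  fold (ctx x p y) in Hs. fold (ctx x' s y') in Hp'. rewrite Hs, ctx_ctx in Hp'.
  assert (HX : outS0 (omul x' x)).
  { destruct (outS0_dec (omul x' x)); [auto | exfalso; apply Hpz; eapply absorb_eq; eauto]. }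
  assert (HY : outS0 (omul y y')).
  { destruct (outS0_dec (omul y y')); [auto | exfalso; apply Hpz; eapply absorb_eq; eauto]. }
  exists y. split.
  { destruct (outS0_dec y) as [|Hy]; [auto|].
    exfalso; exact (outS0_inS0 _ HY (inS0_omul_r _ y' Hy)). }
  rewrite Hs. unfold ctx. destruct x as [c|]; [|reflexivity].
  assert (Hc : ~ S0 c).
  { intro Hc. exact (outS0_inS0 _ HX (inS0_omul_l (Some c) x' Hc)). }
  destruct (omul x' (Some c)) as [c2|] eqn:EX; [|destruct x'; discriminate].
  simpl in HX. unfold ctx in Hp'; simpl in Hp'.
  assert (Hc2p : c2 ** p = p).
  { rewrite Hp' at 2. rewrite Hp' at 1. rewrite <- rmul_mul, Hassoc, (rz c2 c2); auto. }
  assert (Hcp : c ** p = p).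
  { rewrite <- Hc2p at 1. rewrite Hassoc, (rz c c2); auto. }
  simpl. rewrite Hcp. reflexivity.
Qed.

(* A J-class containing two distinct elements p, q is exactly {p, q}: in S0
   by the normal form above, in S1 because |S1| = 2.  So J-classes have at
   most two elements. *)
Lemma Jclass_pair p q : Jcl op p q -> p <> q -> forall s, Jcl op p s -> s = p \/ s = q.
Proof.
  intros Hpq Hne s Hs.
  destruct (classic (S0 p)) as [Hp|Hp].
  2: { assert (Hout : forall w, Jcl op p w -> ~ S0 w)
         by (intros w Hw Hw0; exact (Jcl_S0_S1 p w Hp Hw0 Hw)).
       apply S1_two; auto. }
  assert (Hpz : p <> z) by (intros ->; apply Hne; symmetry; apply Jcl_z; auto).
  destruct (Jclass_form p q Hp Hpz Hpq) as [[d0|] [Hd0 Hq]]; [|simpl in Hq; congruence].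
  simpl in Hd0, Hq.
  assert (HqS : S0 q) by (rewrite Hq; apply S0_r; auto).
  assert (Hqz : q <> z) by (intros E; apply Hpz, Jp_z; rewrite <- E; apply Jcl_Jp'; auto).
  destruct (Jclass_form q p HqS Hqz (Jcl_sym _ _ Hpq)) as [c' [Hc' Hp2]].
  rewrite Hq, rmul_mul in Hp2.
  (* p = p d1 and q = p d0 with d0 <> d1, so {d0, d1} = S1 *)
  assert (Hd1 : ~ S0 (rmul op d0 c')) by (destruct c'; simpl in *; [rewrite rz|]; auto).
  set (d1 := rmul op d0 c') in *.
  assert (Hdd : d0 <> d1) by (intro E; apply Hne; rewrite Hq, E; auto).
  destruct (Jclass_form p s Hp Hpz Hs) as [[c0|] [Hc0 Hs2]]; [|left; auto].
  simpl in Hs2. destruct (S1_two d0 d1 c0 Hd0 Hd1 Hdd Hc0) as [-> | ->]; [right|left]; congruence.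
Qed.

Lemma cong_J r x w : congruence op r -> r x z -> Jp op x w -> r w z.
Proof.
  intros Hr H [a [b ->]]. fold (ctx a x b). rewrite <- (ctx_z a b). apply cong_ctx; auto.
Qed.

(* The conditions (3) and (4) speak about membership in b S1 and in the
   "flanks" S0 b S^1 and S^1 b S0 of b. *)
Definition right_fixed (b : S) : Prop := exists c, ~ S0 c /\ b = b ** c.
Definition S0b (b w : S) : Prop := exists d (y : option S), S0 d /\ w = d ** rmul op b y.
Definition Sb0 (b w : S) : Prop := exists (x : option S) d, S0 d /\ w = lmul op x (b ** d).
Definition flank (b w : S) : Prop := S0b b w \/ Sb0 b w.

Lemma Sb0_intro b x d : S0 d -> Sb0 b (lmul op x b ** d).
Proof. intros Hd. exists x, d. split; auto. symmetry; apply lmul_mul. Qed.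

Lemma Sb0_z b : Sb0 b z.
Proof. exists None, z. split; [apply S0_z | simpl; rewrite zr; reflexivity]. Qed.

Lemma flank_z b : flank b z.
Proof. right; apply Sb0_z. Qed.

Lemma flank_mull b w c : flank b w -> flank b (c ** w).
Proof.
  intros [[d [y [Hd ->]]]|[x [d [Hd ->]]]].
  - left. exists (c ** d), y. rewrite Hassoc. auto using S0_l.
  - right. exists (omul (Some c) x), d. split; auto. destruct x; simpl; rewrite ?Hassoc; auto.
Qed.

Lemma flank_mulr b w c : flank b w -> flank b (w ** c).
Proof.
  intros [[d [y [Hd ->]]]|[x [d [Hd ->]]]].
  - left. exists d, (omul y (Some c)). split; auto.
    destruct y; simpl; rewrite <- ?Hassoc; auto.
  - right. exists x, (d ** c). split; [apply S0_r; auto|].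
    rewrite <- lmul_mul, Hassoc. reflexivity.
Qed.

Lemma flank_ctx_S0 b x y : inS0 x \/ inS0 y -> flank b (ctx x b y).
Proof.
  intros [Hx|Hy].
  - destruct x as [d|]; [|contradiction]. left. exists d, y. split; auto.
    unfold ctx; simpl. apply rmul_mul.
  - destruct y as [d|]; [|contradiction]. right. exists x, d. split; auto.
    unfold ctx; simpl. symmetry; apply lmul_mul.
Qed.

Lemma flank_not_self b : b <> z -> ~ flank b b.
Proof.
  intros Hbz [[d [y [Hd E]]]|[x [d [Hd E]]]]; apply Hbz.
  - apply (absorb_eq b (Some d) y); [|left; exact Hd]. unfold ctx; simpl. rewrite rmul_mul; auto.
  - apply (absorb_eq b x (Some d)); [|right; exact Hd]. unfold ctx; simpl.
    rewrite <- lmul_mul; auto.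
Qed.

Definition two_class (b : S) : Prop :=
  exists u v, u <> v /\ forall s, Jcl op b s <-> (s = u \/ s = v).
Definition zero_below (b : S) : Prop := forall s, Icl op b s <-> s = z.
Definition splits (b a : S) (x y : option S) : Prop :=
  (exists t, Jcl op b t /\ Jcl op a (ctx x t y)) /\
  (exists t, Jcl op b t /\ ~ Jcl op a (ctx x t y)).

Section Forward.
Hypothesis HDelta : Delta_semigroup op.

Lemma bc_above_right_fixed b c : ~ S0 c -> Jp op (b ** c) b -> right_fixed b.
Proof.
  intros Hc [x [y E]].
  rewrite lmul_mul, rmul_mul, <- lmul_mul in E.
  set (c' := rmul op c y) in *.
  assert (E2 : b = ctx x b (Some c')) by (unfold ctx; simpl; rewrite <- lmul_mul; exact E).
  destruct (classic (b = z)) as [Ez|Hbz]; [exists c; split; auto; rewrite Ez, zl; auto|].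
  destruct (outS0_dec x) as [Hx|Hx]; [|exfalso; apply Hbz; eapply absorb_eq; eauto].
  destruct (classic (S0 c')) as [Hc'|Hc']; [exfalso; apply Hbz; eapply absorb_eq; eauto|].
  exists c'. split; auto.
  destruct x as [x1|]; simpl in *; auto.
  rewrite E at 2. rewrite <- !Hassoc, (rz c' c'); auto.
Qed.

Lemma cb_above_fixed b c : ~ S0 c -> Jp op (c ** b) b -> c ** b = b.
Proof.
  intros Hc [x [y E]].
  fold (ctx x (c ** b) y) in E. rewrite ctx_inner_l in E.
  destruct (classic (b = z)) as [Ez|Hbz]; [rewrite Ez, zr; auto|].
  destruct (omul x (Some c)) as [c'|] eqn:EX; [|destruct x; discriminate].
  destruct (classic (S0 c')) as [Hc'|Hc']; [exfalso; apply Hbz; eapply absorb_eq; eauto|].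
  destruct (outS0_dec y) as [Hy|Hy]; [|exfalso; apply Hbz; eapply absorb_eq; eauto].
  assert (E2 : c' ** b = b).
  { unfold ctx in E; simpl in E. rewrite E at 1. rewrite <- rmul_mul, Hassoc, (rz c' c'); auto. }
  rewrite <- E2, Hassoc, (rz c c'); auto.
Qed.

(* Condition (3).  Otherwise b, b c generate a congruence collapsing J(b c);
   the property "w c is in S^1 b S0" is invariant along it and holds at 0. *)
Lemma delta_cond3 b : S0 b -> right_fixed b \/ forall c, ~ S0 c -> Sb0 b (b ** c).
Proof.
  intros Hb. destruct (classic (right_fixed b)) as [|Hn]; [left; auto|right].
  intros c Hc.
  assert (Hcc : c ** c = c) by (apply rz; auto).
  assert (Hch : pcong b (b ** c) (b ** c) z).
  { apply (delta_rees_collapse HDelta (Jp op (b ** c))); auto using Jp_clos, Jp_refl, Jp_to_z.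
    intros [E|[E _]]; [apply Hn; exists c; auto | apply Hn; eapply bc_above_right_fixed; eauto]. }
  assert (Hinv : forall p q, Rp b (b ** c) p q -> (Sb0 b (p ** c) <-> Sb0 b (q ** c))).
  { intros p q [x [y [-> ->]]]. unfold ctx.
    destruct y as [y0|]; simpl.
    - destruct (classic (S0 y0)) as [Hy|Hy].
      + split; intros _; rewrite ?lmul_mul, <- !Hassoc; apply Sb0_intro; auto using S0_l, S0_r.
      + rewrite lmul_mul, <- (Hassoc _ c y0), (rz c y0); auto. tauto.
    - rewrite lmul_mul, <- (Hassoc _ c c), Hcc. tauto. }
  pose proof (chain_inv _ (fun w => Sb0 b (w ** c)) Hinv _ _ Hch) as HH. simpl in HH.
  rewrite <- Hassoc, Hcc, zl in HH. apply HH, Sb0_z.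
Qed.

Lemma flank_outS0 b : S0 b -> (forall c, ~ S0 c -> ~ flank b (c ** b)) ->
  forall x y, outS0 x -> outS0 y ->
  (flank b (ctx x b y) <-> (y <> None /\ ~ right_fixed b)).
Proof.
  intros Hb Hn x y Hx Hy.
  assert (Hbz : b <> z).
  { intros Ez. destruct S1_elem as [e He]. apply (Hn e He). rewrite Ez, zr. apply flank_z. }
  assert (Hxb : ~ flank b (lmul op x b)).
  { destruct x as [c|]; simpl in *; [apply Hn; auto | apply flank_not_self; auto]. }
  unfold ctx. destruct y as [c|]; simpl in *.
  - destruct (classic (right_fixed b)) as [[c0 [Hc0 E]]|Hnf].
    + split; [intro Hf; exfalso | intros [_ []]; exists c0; auto].
      apply Hxb. apply (flank_mulr _ _ c0) in Hf.
      rewrite <- Hassoc, (rz c c0), <- lmul_mul, <- E in Hf; auto.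
    + destruct (delta_cond3 b Hb) as [|H3]; [contradiction|].
      split; [intros _; split; [discriminate | exact Hnf] | intros _].
      destruct (H3 c Hy) as [x' [d [Hd E]]]. rewrite <- lmul_mul, E.
      destruct x as [a|]; simpl; [apply flank_mull|]; right; exists x', d; auto.
  - split; [intro Hf; contradiction | intros [H _]; exfalso; apply H; reflexivity].
Qed.

Lemma flank_Rp_invariant b e : S0 b -> ~ S0 e ->
  (forall c, ~ S0 c -> ~ flank b (c ** b)) ->
  forall p q, Rp b (e ** b) p q -> (flank b p <-> flank b q).
Proof.
  intros Hb He Hn p q [x [y [-> ->]]].
  rewrite ctx_inner_l.
  destruct (outS0_dec x) as [Hx|Hx]; [destruct (outS0_dec y) as [Hy|Hy]|].
  - pose proof (flank_outS0 b Hb Hn x y Hx Hy).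
    pose proof (flank_outS0 b Hb Hn _ y (outS0_omul x (Some e) Hx He) Hy). tauto.
  - split; intros _; apply flank_ctx_S0; right; exact Hy.
  - split; intros _; apply flank_ctx_S0; left; auto using inS0_omul_r.
Qed.

(* Condition (4).  If e b <> b, the principal congruence of (b, e b)
   collapses J(e b); flank membership is invariant along it and holds at 0. *)
Lemma delta_cond4 b : S0 b ->
  (forall s, (exists c, ~ S0 c /\ s = c ** b) <-> s = b) \/
  exists c, ~ S0 c /\ flank b (c ** b).
Proof.
  intros Hb. destruct S1_elem as [e He].
  destruct (classic (e ** b = b)) as [Heb|Heb].
  { left. intro s; split.
    - intros [c [Hc ->]]. rewrite <- Heb, Hassoc, (rz c e); auto.
    - intros ->. exists e; split; [exact He | symmetry; exact Heb]. }
  right. apply NNPP. intro Hn.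
  assert (Hn' : forall c, ~ S0 c -> ~ flank b (c ** b))
    by (intros c Hc Hf; apply Hn; exists c; auto).
  assert (Hch : pcong b (e ** b) (e ** b) z).
  { apply (delta_rees_collapse HDelta (Jp op (e ** b))); auto using Jp_clos, Jp_refl, Jp_to_z.
    intros [E|[E _]]; apply Heb; [symmetry; exact E | apply cb_above_fixed; auto]. }
  apply (Hn' e He), (chain_inv _ _ (flank_Rp_invariant b e Hb He Hn') _ _ Hch), flank_z.
Qed.

(* Condition (5).  The principal congruence of J_b = {u, v} collapses I(b);
   a step of it crossing the border of J_a provides x and y. *)
Lemma delta_cond5 b a : two_class b -> ~ zero_below b -> Icl op b a ->
  exists x y, splits b a x y.
Proof.
  intros [u [v [Huv Hs]]] Hnz Ha.
  assert (Hu : Jcl op b u) by (apply Hs; auto).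
  assert (Hv : Jcl op b v) by (apply Hs; auto).
  assert (Hbz : Icl op b z).
  { split; [apply Jp_to_z|]. intro Hc. apply Huv.
    rewrite (Jcl_z u), (Jcl_z v); auto; eapply Jcl_trans; eauto; apply Jcl_sym; auto. }
  assert (Hcoll : forall w, Icl op b w -> pcong u v w z).
  { intros w Hw. apply (delta_rees_collapse HDelta (Icl op b)); auto using Icl_clos.
    intros [E|[[_ E] _]]; auto. }
  assert (Hcr : exists p q, pcong u v p q /\ Jcl op a p /\ ~ Jcl op a q).
  { destruct (classic (a = z)) as [->|Ea].
    - apply not_all_ex_not in Hnz. destruct Hnz as [w Hw].
      destruct (classic (w = z)) as [->|Ew]; [exfalso; apply Hw; tauto|].
      assert (Hw1 : Icl op b w) by (apply NNPP; intro; apply Hw; tauto).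
      exists z, w. split; [apply chain_sym, Hcoll; exact Hw1|].
      split; [apply Jcl_refl | intro Hc; apply Ew, Jcl_z; exact Hc].
    - exists a, z. split; [apply Hcoll; exact Ha|].
      split; [apply Jcl_refl | intro Hc; apply Ea, Jp_z, Jcl_Jp'; exact Hc]. }
  destruct Hcr as [p [q [Hch [Hp Hq]]]].
  destruct (chain_cross _ (Jcl op a) _ _ Hch Hp Hq) as [p' [q' [[R|R] [Hp' Hq']]]];
    destruct R as [x [y [-> ->]]]; exists x, y; split; eauto.
Qed.

End Forward.

Section Backward.
Hypothesis Hchain : forall I J, ideal op I -> ideal op J ->
  (forall s, I s -> J s) \/ (forall s, J s -> I s).
Hypothesis Hcond3 : forall b, S0 b -> right_fixed b \/ forall c, ~ S0 c -> Sb0 b (b ** c).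
Hypothesis Hcond4 : forall b, S0 b ->
  (forall s, (exists c, ~ S0 c /\ s = c ** b) <-> s = b) \/
  exists c, ~ S0 c /\ flank b (c ** b).
Hypothesis Hcond5 : forall b a, two_class b -> ~ zero_below b -> Icl op b a ->
  exists x y, splits b a x y.

(* By (3): identifying y in S0 with y c (c in S1) outside J_y collapses y. *)
Lemma collapse_right r y c : congruence op r -> S0 y -> ~ S0 c ->
  r y (y ** c) -> ~ Jcl op y (y ** c) -> r y z.
Proof.
  intros Hr Hy Hc H Hn.
  destruct (Hcond3 y Hy) as [[c' [Hc' E]] | Hfac].
  - exfalso. apply Hn, Jcl_of; [apply Jp_mulr, Jp_refl|].
    exists None, (Some c'). simpl. rewrite <- Hassoc, (rz c c'); auto.
  - destruct (Hfac c Hc) as [x [d [Hd E]]].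
    apply (absorb r y x (Some d)); [auto | | right; exact Hd].
    unfold ctx; simpl. rewrite <- lmul_mul, <- E. exact H.
Qed.

(* By (3) and (4): a congruence identifying y with an element strictly below
   it in the J-order collapses y. *)
Lemma collapse_below r y x : congruence op r -> Jp op y x -> ~ Jcl op y x -> r y x -> r y z.
Proof.
  intros Hr Hj Hn H.
  destruct (classic (S0 y)) as [Hy|Hy].
  2: { (* y in S1 and x in S0: y = y^n ~ x^n = 0 *)
    assert (Hx : S0 x) by (apply NNPP; intro Hx; apply Hn, Jcl_S1; auto).
    destruct (nil_S0 x Hx) as [n Hn0]. pose proof (cong_pw r y x n Hr H) as Hyx.
    rewrite pw_idem, Hn0 in Hyx; auto. }
  destruct Hj as [s [t Hx]]. fold (ctx s y t) in Hx. subst x.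
  destruct (outS0_dec s) as [Hs|Hs]; [|apply (absorb r y s t); auto].
  destruct (outS0_dec t) as [Ht|Ht]; [|apply (absorb r y s t); auto].
  assert (Hright : r y (rmul op y t) -> ~ Jcl op y (rmul op y t) -> r y z).
  { destruct t as [c|]; simpl; [apply collapse_right; auto|].
    intros _ Hid; exfalso; apply Hid, Jcl_refl. }
  destruct s as [c|]; [|exact (Hright H Hn)].
  destruct (Hcond4 y Hy) as [Hfix | [c' [Hc' Hfac]]].
  - assert (E : c ** y = y) by (apply Hfix; exists c; auto).
    unfold ctx in *; simpl in *. rewrite E in *. apply Hright; auto.
  - (* y ~ c y t = c' c y t ~ c' y, and c' y lies in the flank of y *)
    assert (Hc'y : r y (c' ** y)).
    { apply cong_trans with (ctx (Some c) y t); auto.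
      assert (E : c' ** ctx (Some c) y t = ctx (Some c) y t).
      { unfold ctx; simpl. rewrite rmul_mul, Hassoc, (rz c' c); auto. }
      rewrite <- E at 1. apply cong_sym; auto. apply (cong_mull r); auto. }
    destruct Hfac as [[d [y' [Hd E]]]|[x' [d [Hd E]]]].
    + apply (absorb r y (Some d) y'); [auto | | left; exact Hd].
      unfold ctx; simpl. rewrite rmul_mul, <- E; auto.
    + apply (absorb r y x' (Some d)); [auto | | right; exact Hd].
      unfold ctx; simpl. rewrite <- lmul_mul, <- E; auto.
Qed.

(* Identifying u and v collapses every a in J_u that is not in J_v: by (2)
   one of u, v lies strictly below the other. *)
Lemma collapse_split r u v a : congruence op r -> r u v ->
  Jcl op a u -> ~ Jcl op a v -> r a z.
Proof.
  intros Hr H Hu Hv.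
  destruct (Jp_chain Hchain u v) as [Huv|Hvu].
  - assert (Hvu : Jp op v u) by (apply Huv, Jp_refl).
    assert (Hnc : ~ Jcl op v u)
      by (intro HC; apply Hv; eapply Jcl_trans; [exact Hu | apply Jcl_sym; exact HC]).
    apply (cong_J r v a); [exact Hr | |].
    + apply (collapse_below r v u); auto. apply cong_sym; auto.
    + eapply Jp_trans; [exact Hvu | apply Jcl_Jp'; exact Hu].
  - assert (Huv : Jp op u v) by (apply Hvu, Jp_refl).
    assert (Hnc : ~ Jcl op u v) by (intro HC; apply Hv; eapply Jcl_trans; eauto).
    apply (cong_J r u a); [exact Hr | apply (collapse_below r u v); auto | apply Jcl_Jp'; exact Hu].
Qed.

(* By (5): identifying the two elements of J_p collapses I(p). *)
Lemma collapse_under_class r p q : congruence op r -> r p q -> p <> q -> Jcl op p q ->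
  forall a, Icl op p a -> r a z.
Proof.
  intros Hr Hpq Hne Hc a Ha.
  destruct (classic (zero_below p)) as [Hz|Hz].
  { apply Hz in Ha. subst a. apply cong_refl; auto. }
  assert (Htwo : two_class p).
  { exists p, q. split; auto. intro s; split; [apply Jclass_pair; auto|].
    intros [-> | ->]; [apply Jcl_refl | exact Hc]. }
  destruct (Hcond5 p a Htwo Hz Ha) as [x [y [[t1 [Ht1 H1]] [t2 [Ht2 H2]]]]].
  apply (collapse_split r (ctx x t1 y) (ctx x t2 y) a); auto.
  apply cong_ctx; auto. apply (cong_pair r p q); auto; apply Jclass_pair; auto.
Qed.

Lemma glue_in_cong r K T : congruence op r -> (forall x, K x -> r x z) ->
  (forall x y, T x -> T y -> r x y) -> subrel (glue K T) r.
Proof.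
  intros Hr HK HT x y [->|[[A B]|[A B]]]; [apply cong_refl; auto | | auto].
  apply cong_trans with z; auto. apply cong_sym; auto.
Qed.

Lemma pair_shape p q : p <> q -> exists K T, shape K T /\ glue K T p q /\
  forall r, congruence op r -> r p q -> subrel (glue K T) r.
Proof.
  intros Hne. destruct (classic (Jcl op p q)) as [Hc|Hc].
  - exists (Icl op p), (Jcl op p). split; [constructor|split].
    + right; right. split; [apply Jcl_refl | exact Hc].
    + intros r Hr Hpq. apply glue_in_cong; auto.
      * apply (collapse_under_class r p q); auto.
      * intros u v Hu Hv. apply (cong_pair r p q); auto; apply (Jclass_pair p q Hc Hne); auto.
  - destruct (Jp_chain Hchain p q) as [H|H].
    + exists (Jp op q), (fun _ => False). split; [constructor|split].
      * right; left. split; [apply H, Jp_refl | apply Jp_refl].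
      * intros r Hr Hpq. apply glue_in_cong; [auto| |tauto].
        intros w Hw. apply (cong_J r q w); auto.
        apply (collapse_below r q p); auto.
        -- apply H, Jp_refl.
        -- intro HC; apply Hc, Jcl_sym; exact HC.
        -- apply cong_sym; auto.
    + exists (Jp op p), (fun _ => False). split; [constructor|split].
      * right; left. split; [apply Jp_refl | apply H, Jp_refl].
      * intros r Hr Hpq. apply glue_in_cong; [auto| |tauto].
        intros w Hw. apply (cong_J r p w); auto.
        apply (collapse_below r p q); auto. apply H, Jp_refl.
Qed.

(* Conditions (2)-(5) make S a Delta-semigroup: if (p, q) is in r but not in
   s, the shape relation of any (x, y) in s is contained in that of (p, q). *)
Lemma backward_delta : Delta_semigroup op.
Proof.
  intros r s Hr Hs.
  destruct (classic (subrel r s)) as [A|A]; [left; exact A|right].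
  apply not_all_ex_not in A. destruct A as [p A].
  apply not_all_ex_not in A. destruct A as [q A].
  apply imply_to_and in A. destruct A as [Hrpq Hspq].
  assert (Hpq : p <> q) by (intro; subst; apply Hspq, cong_refl; auto).
  intros x y Hxy.
  destruct (classic (x = y)) as [->|Hne]; [apply cong_refl; auto|].
  destruct (pair_shape x y Hne) as [K [T [ShK [Gxy Cxy]]]].
  destruct (pair_shape p q Hpq) as [K' [T' [ShK' [Gpq Cpq]]]].
  destruct (shape_chain Hchain _ _ _ _ ShK ShK') as [B|B].
  - apply (Cpq r Hr Hrpq). apply B; auto.
  - exfalso. apply Hspq, (Cxy s Hs Hxy), B; auto.
Qed.

End Backward.
End Decomposition.
End Semigroup.

Theorem theorem1 (S : Type) (op : S -> S -> S) (Hassoc : associative op) :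
  T2R op <->
  exists (S0 : S -> Prop) (z : S),
    (* (1) *)
    (T2R_decomp op S0 z /\
     (forall a c, S0 a -> ~ S0 c -> S0 (op a c))) /\
    (* (2) *)
    (forall I J, ideal op I -> ideal op J ->
       (forall s, I s -> J s) \/ (forall s, J s -> I s)) /\
    (* (3) *)
    (forall b, S0 b ->
       (exists c, ~ S0 c /\ b = op b c) \/
       (forall c, ~ S0 c ->
          exists (x : option S) (d : S), S0 d /\ op b c = lmul op x (op b d))) /\
    (* (4) *)
    (forall b, S0 b ->
       (forall s, (exists c, ~ S0 c /\ s = op c b) <-> s = b) \/
       (exists c, ~ S0 c /\
          ((exists d (y : option S), S0 d /\ op c b = op d (rmul op b y)) \/
           (exists (x : option S) d, S0 d /\ op c b = lmul op x (op b d))))) /\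
    (* (5) *)
    (forall b a,
       (exists u v, u <> v /\ forall s, Jcl op b s <-> (s = u \/ s = v)) ->
       ~ (forall s, Icl op b s <-> s = z) ->
       Icl op b a ->
       exists x y : option S,
         (exists t, Jcl op b t /\ Jcl op a (rmul op (lmul op x t) y)) /\
         (exists t, Jcl op b t /\ ~ Jcl op a (rmul op (lmul op x t) y))).
Proof.
  split.
  - intros [HDelta [S0 [z HD]]]. exists S0, z.
    split; [split; [exact HD | intros a c Ha _; eapply S0_r; eauto]|].
    split; [exact (delta_ideals_chain S op HDelta)|].
    split; [intros b Hb; eapply delta_cond3; eauto|].
    split; [intros b Hb; eapply delta_cond4; eauto|].
    intros b a; eapply delta_cond5; eauto.
  - intros [S0 [z [[HD _] [H2 [H3 [H4 H5]]]]]]. split.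
    + eapply backward_delta; eauto.
    + exists S0, z; exact HD.
Qed.
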